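(* Let $f:\{0,1\}^n\to\mathbb{C}$ have affine support of dimension $r$ with free variables $x_1,\dots,x_r$, where on $\mathrm{supp}(f)$ each variable satisfies $x_i\equiv\sum_{j=1}^r a_{ij}x_j+b_i \pmod 2$ ($1\le i\le n$), with $a_{ij},b_i\in\{0,1\}$, $(a_{ij})_{1\le i,j\le r}=I_r$ and $b_1=\dots=b_r=0$. Suppose \[f=\lambda\cdot\chi_{\mathrm{supp}(f)}\cdot\alpha^{L(x)+2Q(x)+4H(x)},\] where $\lambda\ne0$, $\alpha=e^{\pi i/4}$, $L(x)=\sum_{j=1}^r c_jx_j$, $Q(x)=\sum_{1\le j<k\le r}c_{jk}x_jx_k$, and $H(x)=\sum_{S\subseteq[r],|S|\ge3}c_S\prod_{j\in S}x_j$, all $c$'s integers. Then $f\in\mathscr{L}$ if and only if $H$ is homogeneous of degree 3 (i.e. $c_S\equiv0\pmod 2$ whenever $|S|\ge 4$) and the following congruences hold over $\mathbb{Z}_2$: \[\sum_{i=1}^n\prod_{j\in S}a_{ij}\equiv0 \quad\text{for all } S\subseteq[r] \text{ with } 1\le|S|\le4,\] \[\sum_{i=1}^n\Big(\prod_{j\in S}a_{ij}\Big)b_i\equiv c_S \quad\text{for all } S\subseteq[r] \text{ with } 1\le|S|\le3,\] where $c_{\{j\}}=c_j$, $c_{\{j,k\}}=c_{jk}$, $c_{\{j,k,\ell\}}=c_{jk\ell}$.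
   Context: $\chi_{\mathrm{supp}(f)}$ is the 0-1 indicator of $\mathrm{supp}(f)=\{x:f(x)\ne0\}$. In the exponent of $\alpha$ the variables $x_j\in\{0,1\}$ are integers and the expression is evaluated in $\mathbb{Z}$ (equivalently mod 8); the coefficients $c_j$ (mod 8), $c_{jk}$ (mod 4), $c_S$ for $|S|\ge3$ (mod 2) are uniquely determined by $f$. The class $\mathscr{A}$: $g\in\mathscr{A}$ iff $\mathrm{supp}(g)$ is an affine subspace of $\mathbb{Z}_2^n$ and, for free variables $x_1,\dots,x_r$ of it, $g=\mu\, i^{L'(x_1,\dots,x_r)+2Q'(x_1,\dots,x_r)}$ on the support, with $\mu\neq0$, $L'$ linear with integer coefficients, $Q'$ multilinear with integer coefficients and all monomials of degree 2 (or $g\equiv0$). $f$ of arity $n$ belongs to $\mathscr{L}$ iff for every $\sigma=s_1\cdots s_n\in\mathrm{supp}(f)$ the function $x\mapsto\alpha^{\sum_i s_ix_i}f(x)$ (integer sum) belongs to $\mathscr{A}$. *)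

From mathcomp Require Import all_boot all_order all_algebra all_field.
Set Implicit Arguments. Unset Strict Implicit. Unset Printing Implicit Defensive.
Import Order.TTheory GRing.Theory Num.Theory.
Local Open Scope ring_scope.

Definition bvec (n : nat) := {ffun 'I_n -> bool}.

Definition b2i (b : bool) : int := (b : nat)%:Z.

(* alpha = e^{pi i/4} = (1+i)/sqrt 2. *)
Definition alpha : algC := (1 + 'i) / sqrtC 2.

Definition xsum {I : finType} (P : pred I) (F : I -> bool) : bool :=
  \big[addb/false]_(j | P j) F j.

Definition affine_free {n : nat} (P : bvec n -> bool) (F : {set 'I_n})
    (A : 'I_n -> 'I_n -> bool) (B : 'I_n -> bool) : Prop :=
  [/\ (forall i j, i \in F -> j \in F -> A i j = (i == j)),
      (forall i, i \in F -> B i = false) &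
      (forall x, P x <->
         (forall i, x i = xsum (mem F) (fun j => A i j && x j) (+) B i))].

Definition classA {n : nat} (g : bvec n -> algC) : Prop :=
  (forall x, g x = 0) \/
  exists (F : {set 'I_n}) (A : 'I_n -> 'I_n -> bool) (B : 'I_n -> bool),
    affine_free (fun x => g x != 0) F A B /\
    exists (mu : algC) (l : 'I_n -> int) (q : 'I_n -> 'I_n -> int),
      mu != 0 /\
      forall x, g x != 0 ->
        g x = mu * 'i ^ (\sum_(j in F) l j * b2i (x j)
                        + 2 * \sum_(j in F) \sum_(k in F | (j < k)%N)
                                 q j k * b2i (x j) * b2i (x k)).

Definition classL {n : nat} (f : bvec n -> algC) : Prop :=
  forall s : bvec n, f s != 0 ->
    classA (fun x => alpha ^ (\sum_(i < n) b2i (s i) * b2i (x i)) * f x).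

Definition in_aff {n r : nat} (hr : (r <= n)%N) (a : 'I_n -> 'I_r -> bool)
    (b : 'I_n -> bool) (x : bvec n) : bool :=
  [forall i, x i == xsum predT (fun j => a i j && x (widen_ord hr j)) (+) b i].

Definition freevals {n r : nat} (hr : (r <= n)%N) (x : bvec n) : 'I_r -> int :=
  fun j => b2i (x (widen_ord hr j)).

Definition Lpoly {r : nat} (c1 : 'I_r -> int) (y : 'I_r -> int) : int :=
  \sum_(j < r) c1 j * y j.
Definition Qpoly {r : nat} (c2 : 'I_r -> 'I_r -> int) (y : 'I_r -> int) : int :=
  \sum_(j < r) \sum_(k < r | (j < k)%N) c2 j k * y j * y k.
Definition Hpoly {r : nat} (cS : {set 'I_r} -> int) (y : 'I_r -> int) : int :=
  \sum_(S : {set 'I_r} | (3 <= #|S|)%N) cS S * \prod_(j in S) y j.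

From mathcomp Require Import all_boot all_order all_algebra all_field.
From mathcomp Require Import zify ring.
(** The points of [supp f] are indexed by the set [Z] of free variables equal to 1,
    and their coordinates are [x_i = b_i + |A_i :&: Z| (mod 2)] with
    [A_i = {j | a_ij = 1}]. The exact identity
    [odd m = \sum_(k >= 1) (-2)^(k-1) 'C(m, k)] expands every bit, hence the exponent of
    [alpha] in [x |-> alpha^(s.x) f x], as an integer multilinear polynomial in the
    indicator of [Z]. Twice the exponent of a class-A phase [mu * 'i^(L' + 2 Q')] is a
    quadratic form in the bits [2 x_j], whose coefficient of degree [d] is divisible by
    [2^d]; as multilinear expansions are unique, [alpha^(s.x) f x] is in class A iff the
    coefficients of degree [d] of its exponent are divisible by [2^(min d 3)]. Modulo 2
    these coefficients say [c_S = \sum_i s_i \prod_(j in S) a_ij] for [1 <= |S| <= 3] and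
    [c_S] even for [|S| >= 4]. Moving [s] through [supp f] shifts the first sums by
    [\sum_(k in T) \sum_i \prod_(j in k |: S) a_ij], so they stay constant exactly when
    these counts are even for [1 <= |k |: S| <= 4]. *)

Set Implicit Arguments. Unset Strict Implicit. Unset Printing Implicit Defensive.
Import Order.TTheory GRing.Theory Num.Theory.
Local Open Scope ring_scope.

Lemma alpha2 : alpha ^+ 2 = 'i.
Proof.
rewrite /alpha expr_div_n sqrtCK sqrrD sqrCi expr1n mul1r addrAC subrr add0r.
by rewrite -mulr_natr mulfK // pnatr_eq0.
Qed.

Lemma alpha_neq0 : alpha != 0.
Proof. by apply/eqP => a0; move: (neq0Ci algC); rewrite -alpha2 a0 expr0n eqxx. Qed.

Lemma prim_root_alpha : 8.-primitive_root alpha.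
Proof.
have alpha4 : alpha ^+ 4 = -1 by rewrite (exprM _ 2 2) alpha2 sqrCi.
have alpha8 : alpha ^+ 8 = 1 by rewrite (exprM _ 4 2) alpha4 sqrrN expr1n.
have [m prim_m m_dvd8] := prim_order_exists (isT : (0 < 8)%N) alpha8.
have m_ndvd4 : ~~ (m %| 4)%N.
  by rewrite (prim_order_dvd prim_m) alpha4 -subr_eq0 -opprD oppr_eq0 -mulr2n pnatr_eq0.
have m_le8 : (m <= 8)%N by rewrite dvdn_leq.
by move: prim_m m_dvd8 m_ndvd4; do 9?[case: m m_le8 => [|m] m_le8 //].
Qed.

Lemma alpha_expz_eq1 (k : int) : (alpha ^ k == 1) = (8 %| k)%Z.
Proof.
case: k => k; first by rewrite -(prim_order_dvd prim_root_alpha).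
by rewrite NegzE invr_eq1 rpredN -(prim_order_dvd prim_root_alpha).
Qed.

Lemma alpha_expz_eq (u v : int) : (alpha ^ u == alpha ^ v) = (8 %| u - v)%Z.
Proof.
rewrite -alpha_expz_eq1 expfzDr ?alpha_neq0 // -invr_expz.
apply/eqP/eqP => [->|]; last exact: divr1_eq.
by rewrite mulfV // expfz_neq0 // alpha_neq0.
Qed.

Lemma b2i_and (u v : bool) : b2i (u && v) = b2i u * b2i v.
Proof. by case: u; case: v. Qed.

Lemma i_expz (w : int) : 'i ^ w = alpha ^ (2 * w).
Proof. by rewrite -exprz_exp -alpha2. Qed.

Lemma dvd_pow2_minn3 (m : nat) (N c : int) : (0 < m)%N ->
  (2 ^+ minn m 3 %| (-2) ^+ m.-1 * N + 2 ^+ (minn m 3).-1 * c)%Z =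
  if (m <= 3)%N then (2 %| N + c)%Z else (2 %| c)%Z.
Proof.
case: m => [//|[|[|[|m]]]] _ /=; rewrite ?expr0 ?expr1 ?mul1r //.
- by rewrite expr2; apply/idP/idP; lia.
- by rewrite !exprS expr0; apply/idP/idP; lia.
rewrite !exprS -!mulrA; set X := _ * N.
by rewrite expr0; apply/idP/idP; lia.
Qed.

Lemma eqz_mod2_odd {m m' : nat} {c : int} : (m%:Z = c %[mod 2])%Z ->
  (odd m = odd m') <-> (m'%:Z = c %[mod 2])%Z.
Proof.
move=> /eqP; rewrite eqz_mod_dvd => hm; split => [eqm|/eqP].
  by apply/eqP; rewrite eqz_mod_dvd; lia.
by rewrite eqz_mod_dvd => hm'; lia.
Qed.

Lemma xsumE (I : finType) (P : pred I) (F : I -> bool) :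
  xsum P F = odd #|[set j | P j && F j]|.
Proof.
rewrite -sum1_card (big_morph odd oddD (erefl (odd 0))) /xsum.
rewrite big_mkcond [RHS]big_mkcond; apply: eq_bigr => j _.
by rewrite inE; case: (P j); case: (F j).
Qed.

Lemma card_split_setU1 (I : finType) (S : {set I}) : (1 <= #|S| <= 4)%N ->
  exists k T, k |: T = S /\ (1 <= #|T| <= 3)%N.
Proof.
move=> cardS; have [k kS] : exists k, k \in S.
  by apply/set0Pn; rewrite -card_gt0; case/andP: cardS.
have := cardsD1 k S; rewrite kS => cardSk; have [S1|S1] := eqVneq #|S| 1%N.
  by exists k, S; split; [apply/setUidPr; rewrite sub1set | rewrite S1].
by exists k, (S :\ k); split; [rewrite setD1K | lia].
Qed.

Lemma eq_set_card_neq (I : finType) (U V : {set I}) : #|U| != #|V| -> (U == V) = false.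
Proof. by move=> neqUV; apply: contraNF neqUV => /eqP->. Qed.

Section SetPolynomials.
Variable I : finType.
Implicit Types (T U X Z : {set I}) (e k : {set I} -> int).

(** [setpoly e Z] evaluates, at the indicator vector of [Z], the multilinear
    polynomial whose coefficient on the monomial [\prod_(j in T) y_j] is [e T]. *)
Definition setpoly e Z : int := \sum_T e T * b2i (T \subset Z).

Lemma setpoly_set0 e : setpoly e set0 = e set0.
Proof.
rewrite /setpoly (bigD1 set0) //= sub0set mulr1 big1 ?addr0 // => T nzT.
by rewrite subset0 (negbTE nzT) mulr0.
Qed.

Lemma eq_setpoly e k Z : e =1 k -> setpoly e Z = setpoly k Z.
Proof. by move=> ek; apply: eq_bigr => T _; rewrite ek. Qed.

Lemma setpolyD e k Z : setpoly (fun T => e T + k T) Z = setpoly e Z + setpoly k Z.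
Proof. by rewrite -big_split; apply: eq_bigr => T _; rewrite mulrDl. Qed.

Lemma setpolyB e k Z : setpoly (fun T => e T - k T) Z = setpoly e Z - setpoly k Z.
Proof. by rewrite -sumrB; apply: eq_bigr => T _; rewrite mulrBl. Qed.

Lemma setpoly_pick U c Z : setpoly (fun T => b2i (T == U) * c) Z = c * b2i (U \subset Z).
Proof.
rewrite /setpoly (bigD1 U) //= eqxx mul1r big1 ?addr0 // => T.
by move/negbTE->; rewrite !mul0r.
Qed.

Lemma prod_b2i_subset U Z : \prod_(j in U) b2i (j \in Z) = b2i (U \subset Z).
Proof.
have [subUZ|] := boolP (U \subset Z); first by rewrite big1 // => j /(subsetP subUZ) ->.
by case/subsetPn => j jU /negbTE jZ; rewrite (bigD1 j) //= jZ mul0r.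
Qed.

Lemma setpolyZ c e Z : setpoly (fun T => c * e T) Z = c * setpoly e Z.
Proof. by rewrite mulr_sumr; apply: eq_bigr => T _; rewrite mulrA. Qed.

Lemma setpoly_sum (J : finType) (P : pred J) (E : J -> {set I} -> int) Z :
  setpoly (fun T => \sum_(j | P j) E j T) Z = \sum_(j | P j) setpoly (E j) Z.
Proof. by rewrite [RHS]exchange_big; apply: eq_bigr => T _; rewrite mulr_suml. Qed.

Definition setconv e k U : int :=
  \sum_(p : {set I} * {set I} | p.1 :|: p.2 == U) e p.1 * k p.2.

Lemma setpolyM e k Z : setpoly e Z * setpoly k Z = setpoly (setconv e k) Z.
Proof.
rewrite /setpoly mulr_suml; under eq_bigr => T _ do rewrite mulr_sumr.
rewrite pair_big (partition_big (fun p => p.1 :|: p.2) predT) //.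
apply: eq_bigr => U _; rewrite mulr_suml; apply: eq_bigr => p /eqP <-.
by rewrite subUset b2i_and; ring.
Qed.

Lemma setpoly_coef_dvd (m : int) e :
  (forall Z, (m %| setpoly e Z)%Z) -> forall T, (m %| e T)%Z.
Proof.
move=> dvd_e; suff dvd_small N T : (#|T| < N)%N -> (m %| e T)%Z.
  by move=> T; apply: (dvd_small #|T|.+1).
elim: N T => [//|N IH] T ltTN.
have dvd_rest : (m %| \sum_(T' | T' != T) e T' * b2i (T' \subset T))%Z.
  apply: rpred_sum => T' neqT'.
  have [subT'|_] := boolP (T' \subset T); last by rewrite mulr0 rpred0.
  have ltT'T : (#|T'| < #|T|)%N by apply: proper_card; rewrite properEneq neqT'.
  by apply/dvdz_mulr/IH; lia.
by have := dvd_e T; rewrite /setpoly (bigD1 T) //= subxx mulr1 (rpredDr _ dvd_rest).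
Qed.

Lemma sum_subset_sign X : \sum_(T : {set I} | T \subset X) (-2) ^+ #|T| = (-1) ^+ #|X| :> int.
Proof.
transitivity (\prod_(i : I) ((if i \in X then -2 else 0) + 1) : int); last first.
  rewrite (bigID (mem X)) /= [X in _ * X]big1 ?mulr1 => [|i /negbTE -> //].
  by rewrite -prodr_const; apply: eq_bigr => i ->.
rewrite bigA_distr [RHS](bigID (fun T : {set I} => T \subset X)) /=.
rewrite [X in _ = _ + X]big1 ?addr0 => [|T]; last first.
  case/subsetPn => i iT iX; rewrite (bigD1 i) //= iT (negbTE iX) mul0r //.
apply: eq_bigr => T subTX; rewrite -big_mkcond /= -prodr_const.
by apply: eq_bigr => i /(subsetP subTX) ->.
Qed.

Lemma odd_card_sum X :
  (odd #|X|)%:Z = \sum_(T : {set I} | (T \subset X) && (T != set0)) (-2) ^+ #|T|.-1.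
Proof.
apply: (@mulfI _ (-2)) => //; rewrite mulr_sumr.
under eq_bigr => T /andP[_ nzT] do rewrite -exprS prednK ?card_gt0 //.
have := sum_subset_sign X; rewrite (bigD1 set0) ?sub0set //= cards0 expr0 -signr_odd.
by case: (odd #|X|); rewrite ?expr0 ?expr1 => /= h; rewrite -[RHS](addKr 1) h.
Qed.

Definition bitcoef X (beta : bool) T : int :=
  if T == set0 then b2i beta
  else (1 - 2 * b2i beta) * (-2) ^+ #|T|.-1 * b2i (T \subset X).

Lemma setpoly_bitcoef X beta Z :
  setpoly (bitcoef X beta) Z = b2i (odd #|X :&: Z| (+) beta).
Proof.
rewrite /setpoly (bigD1 set0) //= /bitcoef eqxx sub0set mulr1.
under eq_bigr => T nzT do rewrite (negbTE nzT) -!mulrA -b2i_and -subsetI.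
rewrite -mulr_sumr.
have -> : \sum_(T | T != set0) (-2) ^+ #|T|.-1 * b2i (T \subset X :&: Z) =
          (odd #|X :&: Z|)%:Z.
  rewrite odd_card_sum (eq_bigl _ _ (fun T => andbC _ _)) big_mkcondr /=.
  by apply: eq_bigr => T _; case: (_ \subset _); rewrite ?mulr1 ?mulr0.
by case: beta; case: (odd _).
Qed.

Definition dyadic e := forall T, (2 ^+ #|T| %| e T)%Z.

Lemma dyadic_setconv e k : dyadic e -> dyadic k -> dyadic (setconv e k).
Proof.
move=> de dk U; apply: rpred_sum => p /eqP <-.
apply: dvdz_trans (dvdz_mul (de p.1) (dk p.2)).
by rewrite -exprD dvdz_exp2l // (leq_card_setU p.1 p.2).
Qed.

Lemma dyadic_bitcoef X beta : dyadic (fun T => 2 * bitcoef X beta T).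
Proof.
move=> T; rewrite /bitcoef; have [->|nzT] := eqVneq T set0.
  by rewrite cards0 expr0 dvd1z.
have pos : (0 < #|T|)%N by rewrite card_gt0.
rewrite -[in X in (X %| _)%Z](prednK pos) exprS.
by apply: dvdz_mul => //; apply/dvdz_mulr/dvdz_mull/dvdz_exp2r.
Qed.

Lemma dyadic_mod8 e k : dyadic k ->
    (forall Z, (8 %| (setpoly e Z - setpoly k Z) - (e set0 - k set0))%Z) ->
  forall T, (2 ^+ minn #|T| 3 %| e T)%Z.
Proof.
move=> dk dvd8 T; have [->|nzT] := eqVneq T set0; first by rewrite cards0 dvd1z.
have dvd8_T : (8 %| e T - k T)%Z.
  suff /(_ T) : forall U, (8 %| e U - k U - b2i (U == set0) * (e set0 - k set0))%Z.
    by rewrite (negbTE nzT) mul0r subr0.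
  by apply: setpoly_coef_dvd => Z; rewrite !setpolyB setpoly_pick sub0set mulr1.
rewrite -(subrK (k T) (e T)) rpredD //.
  by apply: dvdz_trans dvd8_T; apply: (@dvdz_exp2l 2 _ 3); rewrite geq_minr.
by apply: dvdz_trans (dk T); apply: dvdz_exp2l; rewrite geq_minl.
Qed.

Lemma setpoly_mod8_deg2 e Z : (forall T, (2 ^+ minn #|T| 3 %| e T)%Z) ->
  (8 %| setpoly e Z - setpoly (fun T => if (#|T| <= 2)%N then e T else 0) Z)%Z.
Proof.
move=> dvd_e; rewrite -setpolyB; apply: rpred_sum => T _; apply: dvdz_mulr.
case: leqP => [_|lt2T]; first by rewrite subrr.
by rewrite subr0; move: (dvd_e T); rewrite (minn_idPr lt2T).
Qed.

Lemma dyadic_quadratic (J : finType) (P : pred J) (R : rel J) (l : J -> int)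
    (q : J -> J -> int) (x : J -> {set I} -> int) :
    (forall j, dyadic (x j)) ->
  exists2 k, dyadic k & forall Z,
    \sum_(j | P j) l j * setpoly (x j) Z
    + \sum_(j | P j) \sum_(j' | P j' && R j j') q j j' * setpoly (x j) Z * setpoly (x j') Z
    = setpoly k Z.
Proof.
move=> dx; exists (fun T => \sum_(j | P j) l j * x j T + \sum_(j | P j)
    \sum_(j' | P j' && R j j') q j j' * setconv (x j) (x j') T).
  move=> T; rewrite rpredD //; apply: rpred_sum => j _; first exact/dvdz_mull/dx.
  by apply: rpred_sum => j' _; apply/dvdz_mull/dyadic_setconv.
move=> Z; rewrite setpolyD !setpoly_sum; congr (_ + _).
  by apply: eq_bigr => j _; rewrite setpolyZ.
apply: eq_bigr => j _; rewrite setpoly_sum; apply: eq_bigr => j' _.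
by rewrite setpolyZ -setpolyM mulrA.
Qed.

End SetPolynomials.

Section PairsOfOrdinals.
Variable r : nat.
Implicit Types (j k : 'I_r) (T Z : {set 'I_r}).

Lemma cards2_lt j k : (j < k)%N -> #|[set j; k]| = 2%N.
Proof. by move=> ltjk; rewrite cards2 -(inj_eq val_inj) neq_ltn ltjk. Qed.

Lemma eq_set2_lt j k j' k' : (j < k)%N -> (j' < k')%N ->
  ([set j; k] == [set j'; k']) = (j == j') && (k == k').
Proof.
move=> ltjk ltjk'; apply/eqP/andP => [E|[/eqP-> /eqP->] //].
have /set2P jj : j \in [set j'; k'] by rewrite -E set21.
have /set2P kk : k \in [set j'; k'] by rewrite -E set22.
by case: jj kk ltjk => -> [] ->; rewrite ?eqxx ?ltnn //; lia.
Qed.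

Lemma big_card2 (F : {set 'I_r} -> int) :
  \sum_(T : {set 'I_r} | #|T| == 2) F T = \sum_(j < r) \sum_(k < r | (j < k)%N) F [set j; k].
Proof.
pose D := [set p : 'I_r * 'I_r | (p.1 < p.2)%N].
have injD : {in D &, injective (fun p => [set p.1; p.2])}.
  move=> [j k] [j' k']; rewrite !inE /= => ltjk ltjk' /eqP.
  by rewrite eq_set2_lt // => /andP[/eqP-> /eqP->].
rewrite pair_big_dep /= [RHS](eq_bigl (fun p => p \in D)) => [|p]; last by rewrite inE.
rewrite -(big_imset F injD); apply: eq_bigl => T; apply/idP/imsetP => [|[p]].
  case/cards2P=> j [k [neqjk ->]]; case: (ltngtP j k) => [ltjk|ltkj|/val_inj eqjk].
  - by exists (j, k); rewrite ?inE.
  - by exists (k, j); rewrite ?inE // setUC.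
  - by rewrite eqjk eqxx in neqjk.
by rewrite inE => ltp ->; rewrite cards2_lt.
Qed.

Lemma sum_set2_pick (G : 'I_r -> 'I_r -> int) j0 k0 : (j0 < k0)%N ->
  \sum_(j < r) \sum_(k < r | (j < k)%N) b2i ([set j0; k0] == [set j; k]) * G j k = G j0 k0.
Proof.
move=> lt0; rewrite pair_big_dep (bigD1 (j0, k0)) //= eqxx mul1r big1 ?addr0 //.
move=> [j k] /= /andP[ltjk neq]; rewrite eq_set2_lt //.
by move: neq; rewrite xpair_eqE eq_sym [k == _]eq_sym => /negbTE->; rewrite mul0r.
Qed.

Lemma setpoly_deg2 (e : {set 'I_r} -> int) Z :
  setpoly (fun T => if (#|T| <= 2)%N then e T else 0) Z =
  e set0 + \sum_(j < r) e [set j] * b2i (j \in Z)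
  + \sum_(j < r) \sum_(k < r | (j < k)%N) e [set j; k] * (b2i (j \in Z) * b2i (k \in Z)).
Proof.
rewrite /setpoly; under eq_bigr do rewrite (fun_if (fun c => c * _)) mul0r.
rewrite -big_mkcond /= (bigD1 set0) ?cards0 //= sub0set mulr1 -addrA; congr (_ + _).
rewrite (bigID (fun T => #|T| == 1%N)) /=; congr (_ + _).
  rewrite (eq_bigl (fun T => #|T| == 1%N)) => [|T]; last first.
    by rewrite -card_gt0; case: #|T| => [|[|[|]]].
  by rewrite big_cards1; apply: eq_bigr => j _; rewrite sub1set.
rewrite (eq_bigl (fun T => #|T| == 2%N)) => [|T]; last first.
  by rewrite -card_gt0; case: #|T| => [|[|[|]]].
rewrite big_card2; apply: eq_bigr => j _; apply: eq_bigr => k _.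
by rewrite subUset !sub1set b2i_and.
Qed.

Lemma forall_card123 (P : {set 'I_r} -> Prop) :
  (forall T, (1 <= #|T| <= 3)%N -> P T) <->
  [/\ forall j, P [set j], forall j k, (j < k)%N -> P [set j; k] & forall T, #|T| = 3 -> P T].
Proof.
split => [PT | [P1 P2 P3] T cardT].
  by split => [j|j k ltjk|T cardT]; apply: PT; rewrite ?cards1 ?cards2_lt ?cardT.
have [/eqP/cards1P[j ->]|neq1] := eqVneq #|T| 1%N; first exact: P1.
have [/eqP/cards2P[j [k [neqjk ->]]]|neq2] := eqVneq #|T| 2%N; last by apply: P3; lia.
case: (ltngtP j k) => [ltjk|ltkj|/val_inj eqjk]; first exact: P2.
  by rewrite setUC; apply: P2.
by rewrite eqjk eqxx in neqjk.
Qed.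

End PairsOfOrdinals.

Section PhaseCoefficients.
Variables (r : nat) (c1 : 'I_r -> int) (c2 : 'I_r -> 'I_r -> int) (cS : {set 'I_r} -> int).
Implicit Types (j k : 'I_r) (T Z : {set 'I_r}).

Definition ccoef T : int :=
  \sum_(j < r) b2i (T == [set j]) * c1 j
  + \sum_(j < r) \sum_(k < r | (j < k)%N) b2i (T == [set j; k]) * c2 j k
  + b2i (3 <= #|T|)%N * cS T.

Lemma ccoef_set1 j : ccoef [set j] = c1 j.
Proof.
rewrite /ccoef cards1 mul0r addr0 (bigD1 j) //= eqxx mul1r big1 => [|k].
  rewrite addr0 big1 ?addr0 // => k _; rewrite big1 // => l ltkl.
  by rewrite eq_set_card_neq ?mul0r // cards1 cards2_lt.
by rewrite (inj_eq set1_inj) eq_sym => /negbTE->; rewrite mul0r.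
Qed.

Lemma ccoef_set2 j k : (j < k)%N -> ccoef [set j; k] = c2 j k.
Proof.
move=> ltjk; rewrite /ccoef cards2_lt // mul0r addr0 sum_set2_pick // big1 ?add0r // => l _.
by rewrite eq_set_card_neq ?mul0r // cards2_lt // cards1.
Qed.

Lemma ccoef_card_ge3 T : (3 <= #|T|)%N -> ccoef T = cS T.
Proof.
move=> geT3; rewrite /ccoef geT3 mul1r big1 ?add0r => [|j _]; last first.
  by rewrite eq_set_card_neq ?mul0r // cards1; lia.
rewrite big1 ?add0r // => j _; rewrite big1 // => k ltjk.
by rewrite eq_set_card_neq ?mul0r // cards2_lt //; lia.
Qed.

Definition phase_coef T : int := 2 ^+ (minn #|T| 3).-1 * ccoef T.

Lemma phase_coefE T : phase_coef T =
  \sum_(j < r) b2i (T == [set j]) * c1 j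
  + 2 * \sum_(j < r) \sum_(k < r | (j < k)%N) b2i (T == [set j; k]) * c2 j k
  + 4 * (b2i (3 <= #|T|)%N * cS T).
Proof.
rewrite /phase_coef /ccoef !mulrDr !mulr_sumr; congr (_ + _ + _).
- apply: eq_bigr => j _; have [->|] := eqVneq T [set j]; first by rewrite cards1 expr0 mul1r.
  by rewrite !mul0r mulr0.
- apply: eq_bigr => j _; rewrite !mulr_sumr; apply: eq_bigr => k ltjk.
  have [->|] := eqVneq T [set j; k]; first by rewrite cards2_lt // expr1.
  by rewrite !mul0r mulr0.
case: leqP => [_|geT3]; first by rewrite !mul0r mulr0.
by rewrite (minn_idPr geT3).
Qed.

Lemma phase_setpoly (y : 'I_r -> int) Z : (forall j, y j = b2i (j \in Z)) ->
  Lpoly c1 y + 2 * Qpoly c2 y + 4 * Hpoly cS y = setpoly phase_coef Z.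
Proof.
move=> yE; rewrite (eq_setpoly _ phase_coefE) !setpolyD !setpolyZ !setpoly_sum.
congr (_ + 2 * _ + 4 * _).
- by apply: eq_bigr => j _; rewrite setpoly_pick sub1set yE.
- apply: eq_bigr => j _; rewrite setpoly_sum; apply: eq_bigr => k _.
  by rewrite setpoly_pick subUset !sub1set b2i_and !yE mulrA.
rewrite /Hpoly big_mkcond; apply: eq_bigr => T _.
rewrite -(prod_b2i_subset T Z) (eq_bigr _ (fun j _ => yE j)).
by case: leqP; rewrite ?mul0r ?mul1r.
Qed.

End PhaseCoefficients.

Section Incidences.
Variables (n r : nat) (a : 'I_n -> 'I_r -> bool) (b : 'I_n -> bool).
Implicit Types (i : 'I_n) (j k : 'I_r) (x s : bvec n) (T Z : {set 'I_r}).

Definition rowset i : {set 'I_r} := [set j | a i j].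
(** Under the hypotheses of [point_widen], the point of the support whose free
    variables equal to 1 are those in [Z]. *)
Definition point Z : bvec n := [ffun i => odd #|rowset i :&: Z| (+) b i].
Definition incid (s : 'I_n -> bool) T : nat := \sum_(i < n) s i * (T \subset rowset i).

Lemma odd_incid (s : 'I_n -> bool) T :
  odd (incid s T) = \big[addb/false]_(i < n) (s i && (T \subset rowset i)).
Proof.
rewrite /incid (big_morph odd oddD (erefl (odd 0))).
by apply: eq_bigr => i _; rewrite oddM !oddb.
Qed.

Lemma odd_incid_point T0 T : odd (incid (point T0) T) =
  odd (incid b T) (+) \big[addb/false]_(k in T0) odd (incid predT (k |: T)).
Proof.
have andb_xsum (c : bool) i : (\big[addb/false]_(k in T0) a i k) && c =
    \big[addb/false]_(k in T0) (a i k && c).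
  exact: (big_morph (fun u => u && c) (fun u v => andb_addl u v c) (erefl _)).
rewrite !odd_incid (eq_bigr (fun i =>
  \big[addb/false]_(k in T0) (a i k && (T \subset rowset i)) (+) (b i && (T \subset rowset i))))
  => [|i _]; last first.
  rewrite ffunE andb_addl -andb_xsum; congr (_ && _ (+) _).
  by rewrite -[RHS]/(xsum _ _) xsumE; congr odd; apply: eq_card => k; rewrite !inE andbC.
rewrite big_split /= addbC; congr (_ (+) _).
rewrite exchange_big; apply: eq_bigr => k _; rewrite odd_incid; apply: eq_bigr => i _.
by rewrite subUset sub1set !inE.
Qed.

Lemma incid_point_parity (c : {set 'I_r} -> int) :
  (forall T0 T, (1 <= #|T| <= 3)%N -> ((incid (point T0) T)%:Z = c T %[mod 2])%Z) <->
  (forall T, (1 <= #|T| <= 4)%N -> ~~ odd (incid predT T)) /\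
  (forall T, (1 <= #|T| <= 3)%N -> ((incid b T)%:Z = c T %[mod 2])%Z).
Proof.
have point0 T : odd (incid (point set0) T) = odd (incid b T).
  by rewrite odd_incid_point big_set0 addbF.
split => [par | [evenN par_b] T0 T cardT]; last first.
  apply: (eqz_mod2_odd (par_b T cardT)).1; rewrite odd_incid_point big1 ?addbF // => k _.
  by apply/negbTE/evenN; rewrite cardsU1; case: (k \notin T); lia.
split => [S cardS | T cardT]; last first.
  by apply: (eqz_mod2_odd (par set0 T cardT)).1; rewrite point0.
have [k [T [kT cardT]]] := card_split_setU1 cardS.
have := odd_incid_point [set k] T; rewrite big_set1 kT.
have := (eqz_mod2_odd (par set0 T cardT)).2 (par [set k] T cardT); rewrite point0 => <-.
by case: (odd (incid b T)); case: (odd _).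
Qed.

Lemma prod_rowset i T : (\prod_(j in T) (a i j : nat))%N = (T \subset rowset i).
Proof.
have [subT|] := boolP (T \subset rowset i).
  by rewrite big1 // => j /(subsetP subT); rewrite inE => ->.
by case/subsetPn => j jT; rewrite inE => /negbTE aij; rewrite (bigD1 j) //= aij.
Qed.

Lemma sum_prod_rowset T : (\sum_(i < n) \prod_(j in T) (a i j : nat))%N = incid predT T.
Proof. by apply: eq_bigr => i _; rewrite prod_rowset /= mul1n. Qed.

Lemma sum_prod_rowset_b T :
  (\sum_(i < n) (\prod_(j in T) (a i j : nat)) * (b i : nat))%N = incid b T.
Proof. by apply: eq_bigr => i _; rewrite prod_rowset mulnC. Qed.

Lemma incid_b_set1 j : (\sum_(i < n) (a i j : nat) * (b i : nat))%N = incid b [set j].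
Proof. by apply: eq_bigr => i _; rewrite sub1set inE mulnC. Qed.

Lemma incid_b_set2 j k :
  (\sum_(i < n) (a i j : nat) * (a i k : nat) * (b i : nat))%N = incid b [set j; k].
Proof.
by apply: eq_bigr => i _; rewrite subUset !sub1set !inE mulnC; case: (a i j); case: (a i k).
Qed.

Variables (c1 : 'I_r -> int) (c2 : 'I_r -> 'I_r -> int) (cS : {set 'I_r} -> int).

Definition twist_coef (s : bvec n) T : int :=
  \sum_(i < n) b2i (s i) * bitcoef (rowset i) (b i) T + phase_coef c1 c2 cS T.

Lemma twist_coef_dvdE s T : T != set0 ->
  (2 ^+ minn #|T| 3 %| twist_coef s T)%Z =
  if (#|T| <= 3)%N then ((incid s T)%:Z == ccoef c1 c2 cS T %[mod 2])%Z
  else (2 %| ccoef c1 c2 cS T)%Z.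
Proof.
move=> nzT.
set N := \sum_(i < n) b2i (s i) * ((1 - 2 * b2i (b i)) * b2i (T \subset rowset i)).
have -> : twist_coef s T = (-2) ^+ #|T|.-1 * N + 2 ^+ (minn #|T| 3).-1 * ccoef c1 c2 cS T.
  rewrite /twist_coef /bitcoef (negbTE nzT) mulr_sumr; congr (_ + _).
  by apply: eq_bigr => i _; ring.
have parN : (2 %| N - (incid s T)%:Z)%Z.
  rewrite /incid (big_morph Posz PoszD (erefl _)) -sumrB; apply: rpred_sum => i _.
  by rewrite PoszM; case: (s i); case: (b i); case: (_ \subset _).
rewrite dvd_pow2_minn3 ?card_gt0 //; case: leqP => // _; rewrite eqz_mod_dvd.
by apply/idP/idP; lia.
Qed.

Lemma twist_coef_dvd_iff s :
  (forall T, (2 ^+ minn #|T| 3 %| twist_coef s T)%Z) <->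
  (forall T, (4 <= #|T|)%N -> (2 %| cS T)%Z) /\
  (forall T, (1 <= #|T| <= 3)%N -> ((incid s T)%:Z = ccoef c1 c2 cS T %[mod 2])%Z).
Proof.
split => [dvd_e | [dvd_cS par_s] T].
  split => T cardT; have := dvd_e T; rewrite twist_coef_dvdE -?card_gt0; try lia.
    by rewrite ifF ?(ccoef_card_ge3 c1 c2 cS) //; lia.
  by rewrite ifT => [/eqP|] //; lia.
have [->|nzT] := eqVneq T set0; first by rewrite cards0 dvd1z.
move: nzT; rewrite -card_gt0 => cardT; rewrite twist_coef_dvdE -?card_gt0 //.
case: leqP => [le3|gt3]; first by apply/eqP/par_s; lia.
by rewrite (ccoef_card_ge3 c1 c2 cS) ?dvd_cS //; lia.
Qed.

End Incidences.

Section AffineSupport.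
Variables (n r : nat) (hr : (r <= n)%N) (a : 'I_n -> 'I_r -> bool) (b : 'I_n -> bool).
Variables (c1 : 'I_r -> int) (c2 : 'I_r -> 'I_r -> int) (cS : {set 'I_r} -> int).
Implicit Types (i : 'I_n) (j k : 'I_r) (x s : bvec n) (T Z : {set 'I_r}).
Local Notation rowset := (rowset a).
Local Notation point := (point a b).
Local Notation twist_coef := (twist_coef a b c1 c2 cS).
Local Notation incid := (incid a).

Definition free_ones x : {set 'I_r} := [set j | x (widen_ord hr j)].

Lemma in_affE x : in_aff hr a b x = (x == point (free_ones x)).
Proof.
have rowE i : xsum predT (fun j => a i j && x (widen_ord hr j)) =
              odd #|rowset i :&: free_ones x|.
  by rewrite xsumE; congr (odd _); apply: eq_card => j; rewrite !inE.
apply/forallP/eqP => [xE|xE i]; last by rewrite {1}xE ffunE rowE.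
by apply/ffunP => i; rewrite ffunE -rowE; apply/eqP.
Qed.

Definition free_coords : {set 'I_n} := [set widen_ord hr j | j : 'I_r].
Definition lift_free (T : Type) (g : 'I_r -> T) (d : T) (j' : 'I_n) : T :=
  oapp g d (insub (val j')).

Lemma lift_free_widen (T : Type) (g : 'I_r -> T) d j :
  lift_free g d (widen_ord hr j) = g j.
Proof.
rewrite /lift_free; case: insubP => [k _ /= kE|/negP[]]; last exact: (ltn_ord j).
by congr g; apply: val_inj.
Qed.

Lemma widen_ord_inj : injective (widen_ord hr).
Proof. by move=> j k /(congr1 val) jk; apply: val_inj. Qed.

Lemma big_free_coords (R : Type) (idx : R) (op : Monoid.com_law idx) (G : 'I_n -> R) :
  \big[op/idx]_(j' in free_coords) G j' = \big[op/idx]_(j < r) G (widen_ord hr j).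
Proof. exact: big_imset (in2W widen_ord_inj). Qed.

Lemma big_free_coords_cond (R : Type) (idx : R) (op : Monoid.com_law idx) (P : pred 'I_n)
    (G : 'I_n -> R) :
  \big[op/idx]_(j' in free_coords | P j') G j' =
  \big[op/idx]_(j < r | P (widen_ord hr j)) G (widen_ord hr j).
Proof. exact: big_imset_cond (in2W widen_ord_inj). Qed.

Lemma xsum_free_coords (F : 'I_n -> bool) :
  xsum (mem free_coords) F = xsum predT (fun j => F (widen_ord hr j)).
Proof. exact: big_free_coords. Qed.

Hypothesis ha : forall j k, a (widen_ord hr j) k = (j == k).
Hypothesis hb : forall j, b (widen_ord hr j) = false.

Lemma point_widen Z j : point Z (widen_ord hr j) = (j \in Z).
Proof.
rewrite ffunE.
have -> : rowset (widen_ord hr j) = [set j].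
  by apply/setP => k; rewrite !inE ha eq_sym.
rewrite hb addbF; have [jZ|jNZ] := boolP (j \in Z).
  by rewrite (setIidPl _) ?cards1 ?sub1set.
rewrite (_ : _ :&: Z = set0) ?cards0 //.
by apply/setP => k; rewrite !inE; case: eqP => // ->; exact: negbTE.
Qed.

Lemma free_ones_point Z : free_ones (point Z) = Z.
Proof. by apply/setP => j; rewrite inE point_widen. Qed.

Lemma in_aff_point Z : in_aff hr a b (point Z).
Proof. by rewrite in_affE free_ones_point. Qed.

Lemma affine_free_support (P : bvec n -> bool) : (forall x, P x = in_aff hr a b x) ->
  affine_free P free_coords (fun i => lift_free (a i) false) b.
Proof.
move=> PE; split.
- move=> _ _ /imsetP[i _ ->] /imsetP[j _ ->].
  by rewrite lift_free_widen ha (inj_eq widen_ord_inj).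
- by move=> _ /imsetP[j _ ->].
move=> x; have rowE i : xsum (mem free_coords) (fun u => lift_free (a i) false u && x u) =
                        xsum predT (fun j => a i j && x (widen_ord hr j)).
  by rewrite xsum_free_coords; apply: eq_bigr => j _; rewrite lift_free_widen.
rewrite PE; split => [/forallP xE i | xE]; first by rewrite rowE; apply/eqP.
by apply/forallP => i; rewrite -rowE -xE.
Qed.

Variables (lam : algC) (f : bvec n -> algC).
Hypothesis hlam : lam != 0.
Hypothesis hf : forall x, f x =
  if in_aff hr a b x then
    lam * alpha ^ (Lpoly c1 (freevals hr x) + 2 * Qpoly c2 (freevals hr x)
                   + 4 * Hpoly cS (freevals hr x))
  else 0.

Definition twist s x : algC := alpha ^ (\sum_(i < n) b2i (s i) * b2i (x i)) * f x.

Lemma f_neq0 x : (f x != 0) = in_aff hr a b x.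
Proof.
by rewrite hf; case: in_aff; rewrite ?eqxx // mulf_neq0 // expfz_neq0 // alpha_neq0.
Qed.

Lemma twist_neq0 s x : (twist s x != 0) = in_aff hr a b x.
Proof. by rewrite /twist mulf_eq0 negb_or expfz_neq0 ?alpha_neq0 // f_neq0. Qed.

Lemma twist_point s Z : twist s (point Z) = lam * alpha ^ setpoly (twist_coef s) Z.
Proof.
rewrite /twist hf in_aff_point mulrCA -expfzDr ?alpha_neq0 //; congr (_ * alpha ^ _).
rewrite setpolyD setpoly_sum -(@phase_setpoly _ c1 c2 cS (freevals hr (point Z))) => [|j].
  by congr (_ + _); apply: eq_bigr => i _; rewrite setpolyZ setpoly_bitcoef ffunE.
by rewrite /freevals point_widen.
Qed.

Lemma classA_twist_dvd s :
  classA (twist s) -> forall T, (2 ^+ minn #|T| 3 %| twist_coef s T)%Z.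
Proof.
case=> [twist0 | [F [_ [_ [_ [mu [l [q [_ twistE]]]]]]]]].
  by have := twist_neq0 s (point set0); rewrite twist0 eqxx in_aff_point.
(* Twice the class-A exponent is a quadratic form in the bits [2 x_u]. *)
have [k dk /= kE] := dyadic_quadratic (fun u => u \in F) (fun u v : 'I_n => (u < v)%N) l q
  (fun i => dyadic_bitcoef (rowset i) (b i)).
have bitE u Z : setpoly (fun T => 2 * bitcoef (rowset u) (b u) T) Z = 2 * b2i (point Z u).
  by rewrite setpolyZ setpoly_bitcoef ffunE.
have twistZ Z : twist s (point Z) = mu * alpha ^ setpoly k Z.
  rewrite twistE ?twist_neq0 ?in_aff_point // i_expz -kE mulrDr !mulr_sumr.
  congr (_ * alpha ^ (_ + _)).
    rewrite [RHS](eq_bigr (fun u => 2 * (l u * b2i (point Z u)))) // => u _.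
    by rewrite bitE mulrCA.
  rewrite [RHS](eq_bigr (fun u : 'I_n => 2 * (2 * \sum_(v in F | (u < v)%N)
     q u v * b2i (point Z u) * b2i (point Z v)))) // => u _.
  by rewrite !mulr_sumr; apply: eq_bigr => v _; rewrite !bitE; ring.
have ratio Z : alpha ^ (setpoly (twist_coef s) Z - setpoly k Z) = mu / lam.
  have := twistZ Z; rewrite twist_point => eqZ.
  rewrite expfzDr ?alpha_neq0 // -invr_expz; apply: (mulfI hlam).
  by rewrite mulrA eqZ mulfK ?expfz_neq0 ?alpha_neq0 // mulrCA divff ?mulr1.
apply: dyadic_mod8 dk _ => Z.
by rewrite -(setpoly_set0 (twist_coef s)) -(setpoly_set0 k) -alpha_expz_eq !ratio.
Qed.

Lemma twist_classA s :
  (forall T, (2 ^+ minn #|T| 3 %| twist_coef s T)%Z) -> classA (twist s).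
Proof.
move=> dvd_e; right; exists free_coords, (fun i => lift_free (a i) false), b; split.
  by apply: affine_free_support => x; rewrite twist_neq0.
(* Modulo 8 only the coefficients of degree at most 2 survive; halve and quarter them. *)
exists (lam * alpha ^ twist_coef s set0),
  (lift_free (fun j => twist_coef s [set j] %/ 2)%Z 0),
  (fun u v => lift_free (fun j => lift_free (fun k => twist_coef s [set j; k] %/ 4)%Z 0 v) 0 u).
split; first by rewrite mulf_neq0 // expfz_neq0 // alpha_neq0.
move=> x; rewrite twist_neq0 in_affE => /eqP ->; set Z := free_ones x.
rewrite twist_point i_expz -mulrA -expfzDr ?alpha_neq0 //; congr (_ * _); apply/eqP.
rewrite alpha_expz_eq [X in (8 %| _ - X)%Z](_ : _ =
  setpoly (fun T => if (#|T| <= 2)%N then twist_coef s T else 0) Z).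
  exact: setpoly_mod8_deg2.
rewrite setpoly_deg2 -[RHS]addrA mulrDr !big_free_coords !mulr_sumr; congr (_ + (_ + _)).
  apply: eq_bigr => j _; have dvd2 : (2 %| twist_coef s [set j])%Z.
    by have := dvd_e [set j]; rewrite cards1.
  by rewrite lift_free_widen point_widen -[in RHS](divzK dvd2); ring.
apply: eq_bigr => j _; rewrite big_free_coords_cond !mulr_sumr; apply: eq_bigr => k ltjk.
have dvd4 : (4 %| twist_coef s [set j; k])%Z by have := dvd_e [set j; k]; rewrite cards2_lt.
by rewrite !lift_free_widen !point_widen -[in RHS](divzK dvd4); ring.
Qed.

Lemma classL_iff_parity : classL f <->
  (forall T, (4 <= #|T|)%N -> (2 %| cS T)%Z) /\
  (forall T0 T, (1 <= #|T| <= 3)%N -> ((incid (point T0) T)%:Z = ccoef c1 c2 cS T %[mod 2])%Z).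
Proof.
split => [fL | [dvd_cS par] s].
  have fP T0 : f (point T0) != 0 by rewrite f_neq0 in_aff_point.
  have par T0 := (twist_coef_dvd_iff a b c1 c2 cS (point T0)).1
    (classA_twist_dvd (fL _ (fP T0))).
  by split => [|T0]; [exact: (par set0).1 | exact: (par T0).2].
rewrite f_neq0 in_affE => /eqP ->.
by apply/twist_classA/(twist_coef_dvd_iff a b c1 c2 cS); split => //; apply: par.
Qed.

End AffineSupport.

Theorem theorem3p4 (n r : nat) (hr : (r <= n)%N)
  (a : 'I_n -> 'I_r -> bool) (b : 'I_n -> bool)
  (ha : forall j k : 'I_r, a (widen_ord hr j) k = (j == k))
  (hb : forall j : 'I_r, b (widen_ord hr j) = false)
  (lam : algC) (hlam : lam != 0)
  (c1 : 'I_r -> int) (c2 : 'I_r -> 'I_r -> int) (cS : {set 'I_r} -> int)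
  (f : bvec n -> algC)
  (hf : forall x : bvec n, f x =
     if in_aff hr a b x then
       lam * alpha ^ (Lpoly c1 (freevals hr x) + 2 * Qpoly c2 (freevals hr x)
                      + 4 * Hpoly cS (freevals hr x))
     else 0) :
  classL f <->
  [/\ (forall S : {set 'I_r}, (4 <= #|S|)%N -> (2 %| cS S)%Z),
      (forall S : {set 'I_r}, (1 <= #|S| <= 4)%N ->
          ~~ odd (\sum_(i < n) \prod_(j in S) (a i j : nat))%N),
      (forall j : 'I_r,
          ((\sum_(i < n) (a i j : nat) * (b i : nat))%N%:Z = c1 j %[mod 2])%Z),
      (forall j k : 'I_r, (j < k)%N ->
          ((\sum_(i < n) (a i j : nat) * (a i k : nat) * (b i : nat))%N%:Z
             = c2 j k %[mod 2])%Z) &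
      (forall S : {set 'I_r}, #|S| = 3%N ->
          ((\sum_(i < n) (\prod_(j in S) (a i j : nat)) * (b i : nat))%N%:Z
             = cS S %[mod 2])%Z)].
Proof.
have [toPar ofPar] := classL_iff_parity ha hb hlam hf.
have [toB ofB] := incid_point_parity a b (ccoef c1 c2 cS).
split => [/toPar[dvd_cS /toB[evenN /forall_card123[par1 par2 par3]]] | ].
  split => // [S /evenN | j | j k ltjk | S cardS].
  - by rewrite sum_prod_rowset.
  - by rewrite incid_b_set1 -(ccoef_set1 c1 c2 cS); exact: par1.
  - by rewrite incid_b_set2 -(ccoef_set2 c1 c2 cS ltjk); exact: par2.
  - by rewrite sum_prod_rowset_b -(@ccoef_card_ge3 _ c1 c2 cS S) ?cardS //; exact: par3.
move=> [dvd_cS evenN par1 par2 par3]; apply/ofPar; split => //.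
apply/ofB; split => [S /evenN | ]; first by rewrite sum_prod_rowset.
apply/forall_card123; split => [j | j k ltjk | S cardS].
- by rewrite ccoef_set1 -incid_b_set1; exact: par1.
- by rewrite ccoef_set2 // -incid_b_set2; exact: par2.
- by rewrite ccoef_card_ge3 ?cardS // -sum_prod_rowset_b; exact: par3.
Qed.
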